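(* Let \(G=(V,E)\) be a connected graph with spanning tree \(T\). Let \(G_i\) be an induced subgraph of \(G\) such that the restriction \(T_i\) of \(T\) to \(V(G_i)\) is a spanning tree of \(G_i\). If \(T\) is the \(\mathcal{L}\)-tree of an LDFS ordering of \(G\), then \(T_i\) is the \(\mathcal{L}\)-tree of an LDFS ordering of \(G_i\). In particular, if \(T\) is the \(\mathcal{L}\)-tree of an LDFS ordering of \(G\) starting at \(r\in V\) and \(r\in V(G_i)\), then \(T_i\) is the \(\mathcal{L}\)-tree of an LDFS ordering of \(G_i\) starting at \(r\).
   Context: An LDFS ordering of a connected graph is any vertex ordering \((v_1,\dots,v_n)\) produced as follows for some start vertex \(s\) (then \(v_1=s\)) and some tie-breaking: give \(s\) the label \((0)\) and every other vertex the empty label; for \(i=1,\dots,n\), pick an unnumbered vertex with lexicographically largest label, set it as \(v_i\), and prepend \(i\) to the label of every unnumbered neighbor of it. The \(\mathcal{L}\)-tree of an ordering \((v_1,\dots,v_n)\) is the tree containing, for each \(i\ge2\), the edge from \(v_i\) to its rightmost neighbor \(v_j\) with \(j<i\). The restriction of \(T\) to a vertex set \(S\) is the subgraph of \(T\) induced by \(S\). *)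

From mathcomp Require Import all_boot.
Set Implicit Arguments. Unset Strict Implicit. Unset Printing Implicit Defensive.

(* Graphs: vertex type V : finType, edge relation e : rel V (symmetric,
   irreflexive).  A graph on a vertex set S is (S, e restricted to S). *)

Definition restr (V : finType) (S : {set V}) (r : rel V) : rel V :=
  [rel x y | [&& r x y, x \in S & y \in S]].

Definition connected_on (V : finType) (S : {set V}) (r : rel V) : Prop :=
  (exists x, x \in S) /\
  forall x y, x \in S -> y \in S -> connect (restr S r) x y.

Definition acyclic_on (V : finType) (S : {set V}) (r : rel V) : Prop :=
  ~ exists p : seq V, [/\ {subset p <= S}, uniq p, 3 <= size p & cycle r p].

Definition tree_on (V : finType) (S : {set V}) (r : rel V) : Prop :=
  connected_on S r /\ acyclic_on S r.

Definition spanning_tree_on (V : finType) (e : rel V) (S : {set V}) (t : rel V) : Prop :=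
  (forall x y, x \in S -> y \in S -> t x y -> e x y) /\ tree_on S t.

Fixpoint lexle (a b : seq nat) : bool :=
  match a, b with
  | [::], _ => true
  | _ :: _, [::] => false
  | x :: a', y :: b' => (x < y) || ((x == y) && lexle a' b')
  end.

(* Label of w after the first i vertices of sigma (numbered 1..i) have been
   numbered, each prepending its number to its unnumbered neighbours, the
   start vertex s having started with the label (0). *)
Definition ldfs_label (V : finType) (e : rel V) (sigma : seq V) (s : V)
    (i : nat) (w : V) : seq nat :=
  rev [seq j.+1 | j <- iota 0 i & e (nth w sigma j) w]
  ++ (if w == s then [:: 0] else [::]).

Definition LDFS_from (V : finType) (e : rel V) (S : {set V}) (s : V)
    (sigma : seq V) : Prop :=
  [/\ s \in S, uniq sigma, (forall x, (x \in sigma) = (x \in S)) &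
      forall i, i < size sigma -> forall w, w \in drop i sigma ->
        lexle (ldfs_label e sigma s i w) (ldfs_label e sigma s i (nth s sigma i))].

Definition LDFS (V : finType) (e : rel V) (S : {set V}) (sigma : seq V) : Prop :=
  exists s, LDFS_from e S s sigma.

(* x = v_i (i >= 2) and y is its rightmost earlier neighbour in sigma *)
Definition Ledge (V : finType) (e : rel V) (sigma : seq V) (x y : V) : bool :=
  let i := index x sigma in
  let P := [seq u <- take i sigma | e u x] in
  [&& 0 < i, i < size sigma, y \in P & y == last y P].

Definition is_Ltree (V : finType) (e : rel V) (sigma : seq V) (r : rel V) : Prop :=
  forall x y, r x y = Ledge e sigma x y || Ledge e sigma y x.

(* In an LDFS ordering sigma, the numbered vertices that still have unnumbered
   neighbours always lie on the L-tree path from the start vertex to the last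
   numbered vertex, just like the stack of a depth-first search; hence every
   edge of G joins a vertex to one of its L-tree ancestors.
   Let sigma_S be sigma restricted to S and r_S its first vertex.  Every vertex
   v of S other than r_S has its L-tree parent in S: otherwise the component of
   v in T restricted to S would consist of descendants of v, which r_S is not;
   so every L-tree ancestor of a vertex of S that comes after r_S lies in S, and
   so does every neighbour of b in S numbered after some vertex of S and before
   b.  When two candidates w, b of S are compared at a step of sigma, the
   comparison is decided by the most recent vertex adjacent to exactly one of
   them, which is a neighbour of b; by the above it lies in S as soon as some
   vertex of S precedes it, and otherwise w and b tie on the vertices of S.  So
   sigma_S obeys the LDFS rule in G[S], its L-tree edges are the edges of T
   inside S, and r_S = r whenever the start r of sigma lies in S. *)

From mathcomp Require Import all_boot.
Set Implicit Arguments. Unset Strict Implicit. Unset Printing Implicit Defensive.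

Section SeqFacts.
Variable T : eqType.
Implicit Types (s l : seq T) (P : pred T).

Lemma index_rcons s v x :
  index x (rcons s v) = if x \in s then index x s else size s + (v != x).
Proof. by rewrite -cats1 index_cat /=; case: (v == x). Qed.

Lemma index_take s k x : x \in take k s -> index x (take k s) = index x s.
Proof. by move=> xk; rewrite -{2}(cat_take_drop k s) index_cat xk. Qed.

Lemma leq_index_drop s k x : uniq s -> x \in drop k s -> k <= index x s.
Proof.
rewrite -{1}(cat_take_drop k s) cat_uniq => /and3P [_ /hasPn disj _] xd.
have xs : x \in s by apply: mem_drop xd.
by move: (disj x xd); rewrite in_take // -leqNgt.
Qed.

Lemma mem_last_nonnil l x0 : l != [::] -> last x0 l \in l.
Proof. by case: l => [|y l] // _; rewrite /= mem_last. Qed.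

Lemma last_default_irr l x0 y0 : l != [::] -> last x0 l = last y0 l.
Proof. by case: l. Qed.

Lemma last_filter_last l P x0 : l != [::] -> P (last x0 l) ->
  filter P l != [::] /\ last x0 (filter P l) = last x0 l.
Proof.
case/lastP: l => [|l z] // _; rewrite last_rcons filter_rcons => ->.
by rewrite last_rcons; case: (filter P l).
Qed.

Lemma index_le_last_filter s P u : uniq s -> u \in filter P s ->
  index u s <= index (last u (filter P s)) s.
Proof.
elim/last_ind: s => [|s z IH] //; rewrite rcons_uniq filter_rcons => /andP [zNs s_uniq].
have index_s y : y \in filter P s -> index y (rcons s z) = index y s.
  by rewrite mem_filter index_rcons => /andP [_ ->].
case: (P z) => [|] uP.
  rewrite last_rcons [index z _]index_rcons (negbTE zNs) eqxx addn0 -ltnS.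
  rewrite -(size_rcons s z) index_mem; move: uP; rewrite !mem_rcons !inE mem_filter.
  by case/orP=> [-> // | /andP [_ ->]]; rewrite orbT.
have nonnil : filter P s != [::] by apply: contraTneq uP => ->.
by rewrite !index_s ?IH // mem_last_nonnil.
Qed.

Lemma index_head_filter s P a x0 : a \in s -> P a ->
  index (head x0 (filter P s)) s <= index a s.
Proof.
elim: s => [|h s IH] //=; rewrite inE => /orP [/eqP <- -> | a_s Pa] /=; first by rewrite eqxx.
case Ph: (P h) => /=; first by rewrite eqxx.
have hd_s : head x0 (filter P s) \in filter P s.
  have : a \in filter P s by rewrite mem_filter Pa.
  by case: (filter P s) => //= y l _; rewrite mem_head.
rewrite mem_filter in hd_s; case/andP: hd_s => Phd _.
have -> : (h == head x0 (filter P s)) = false by apply: contraFF Ph => /eqP ->.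
case: (h =P a) => [ha|_]; first by rewrite ha Pa in Ph.
by rewrite ltnS IH.
Qed.

Lemma filter_index_cat s P x : x \in s -> P x ->
  filter P s = filter P (take (index x s) s) ++ x :: filter P (drop (index x s).+1 s).
Proof.
move=> xs Px; rewrite -{1}(cat_take_drop (index x s) s) filter_cat drop_index //=.
by rewrite Px.
Qed.

Lemma index_filter s P x : x \in s -> P x ->
  index x (filter P s) = size (filter P (take (index x s) s)).
Proof.
move=> xs Px; rewrite (filter_index_cat xs Px) index_cat mem_filter.
by rewrite in_take // ltnn andbF /= eqxx addn0.
Qed.

Lemma take_index_filter s P x : x \in s -> P x ->
  take (index x (filter P s)) (filter P s) = filter P (take (index x s) s).
Proof.
by move=> xs Px; rewrite index_filter // (filter_index_cat xs Px) take_size_cat.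
Qed.

Lemma drop_index_filter s P x : x \in s -> P x ->
  drop (index x (filter P s)) (filter P s) = filter P (drop (index x s) s).
Proof.
move=> xs Px; rewrite index_filter // (filter_index_cat xs Px) drop_size_cat //.
by rewrite drop_index //= Px.
Qed.

End SeqFacts.

Section Labels.
Variables (V : finType) (e : rel V).

Definition prefix_label (pre : seq V) (w : V) : seq nat :=
  rev [seq j.+1 | j <- iota 0 (size pre) & e (nth w pre j) w].

Fixpoint nbr_lexle (l : seq V) (w b : V) : bool :=
  if l is v :: l' then (if e v w == e v b then nbr_lexle l' w b else e v b) else true.

Lemma prefix_label_rcons pre v w : prefix_label (rcons pre v) w =
  if e v w then (size pre).+1 :: prefix_label pre w else prefix_label pre w.
Proof.
rewrite /prefix_label size_rcons -addn1 iotaD filter_cat map_cat rev_cat /=.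
rewrite nth_rcons ltnn eqxx add0n addn1.
have -> : [seq j <- iota 0 (size pre) | e (nth w (rcons pre v) j) w] =
          [seq j <- iota 0 (size pre) | e (nth w pre j) w].
  by apply: eq_in_filter => j; rewrite mem_iota /= nth_rcons => ->.
by case: (e v w).
Qed.

Lemma prefix_label_leq pre w j : j \in prefix_label pre w -> j <= size pre.
Proof. by rewrite mem_rev => /mapP [i]; rewrite mem_filter mem_iota => /andP [_ /=] + ->. Qed.

(* Label entries are decreasing step numbers, so the comparison is decided by
   the most recently numbered vertex adjacent to exactly one of w and b. *)
Lemma lexle_prefix_label pre w b :
  lexle (prefix_label pre w) (prefix_label pre b) = nbr_lexle (rev pre) w b.
Proof.
elim/last_ind: pre => [|pre v IH] //.
rewrite !prefix_label_rcons rev_rcons /=.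
have small_w := @prefix_label_leq pre w; have small_b := @prefix_label_leq pre b.
case: (e v w); case: (e v b) => /=.
- by rewrite ltnn eqxx.
- case Eb: (prefix_label pre b) => [|j l] //=.
  have := small_b j; rewrite Eb mem_head => /(_ isT) jle.
  by rewrite ltnNge (leqW jle) eqn_leq ltnNge jle.
- case Ew: (prefix_label pre w) => [|j l] //=.
  by have := small_w j; rewrite Ew mem_head ltnS => ->.
- exact: IH.
Qed.

Lemma ldfs_labelE sigma s i w : i <= size sigma ->
  ldfs_label e sigma s i w = prefix_label (take i sigma) w ++ (if w == s then [:: 0] else [::]).
Proof.
move=> le_i; rewrite /ldfs_label /prefix_label size_takel //.
congr (rev (map _ _) ++ _); apply: eq_in_filter => j; rewrite mem_iota /= => lt_j.
by rewrite nth_take.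
Qed.

Lemma nbr_lexle_witness s w b y : uniq s -> nbr_lexle (rev s) w b -> y \in s -> e y w ->
  exists2 z, z \in s & index y s <= index z s /\ e z b.
Proof.
elim/last_ind: s => [|s v IH] //; rewrite rev_rcons rcons_uniq => /andP [vNs s_uniq] /=.
rewrite mem_rcons inE => le_wb y_s e_yw.
case e_vb: (e v b).
  exists v; rewrite ?mem_rcons ?mem_head //; split=> //.
  rewrite [index v _]index_rcons (negbTE vNs) eqxx addn0 -ltnS -(size_rcons s v) index_mem.
  by rewrite mem_rcons inE.
case e_vw: (e v w); rewrite e_vw e_vb /= in le_wb => //.
case/orP: y_s => [/eqP yv | y_s]; first by rewrite -yv e_yw in e_vw.
have [z z_s [le_yz e_zb]] := IH s_uniq le_wb y_s e_yw.
by exists z; rewrite ?mem_rcons ?inE ?z_s ?orbT // !index_rcons y_s z_s.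
Qed.

Lemma nbr_lexle_filter s w b (P : pred V) : uniq s -> nbr_lexle (rev s) w b ->
  (forall x a, x \in s -> a \in s -> index a s < index x s -> e x b -> P a -> P x) ->
  nbr_lexle (rev (filter P s)) w b.
Proof.
elim/last_ind: s => [|s v IH] //; rewrite rev_rcons rcons_uniq => /andP [vNs s_uniq] /=.
move=> le_wb closedP; rewrite filter_rcons.
have index_s y : y \in s -> index y (rcons s v) = index y s.
  by move=> y_s; rewrite index_rcons y_s.
have closedP_s x a : x \in s -> a \in s -> index a s < index x s -> e x b -> P a -> P x.
  move=> x_s a_s; rewrite -(index_s x) // -(index_s a) //.
  by apply: closedP; rewrite mem_rcons inE ?x_s ?a_s orbT.
case same_v: (e v w == e v b); rewrite same_v in le_wb.
  by case: (P v); rewrite ?rev_rcons /= ?same_v; apply: IH.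
case Pv: (P v); first by rewrite rev_rcons /= same_v.
suff -> : filter P s = [::] by [].
apply/eqP; rewrite -[_ == _]negbK -has_filter; apply/hasP => [[a a_s Pa]].
suff : P v by rewrite Pv.
apply: (closedP v a); rewrite ?mem_rcons ?mem_head ?inE ?a_s ?orbT //.
by rewrite index_s // [index v _]index_rcons (negbTE vNs) eqxx addn0 index_mem.
Qed.

End Labels.

Section LTree.
Variables (V : finType) (e : rel V).

Definition earlier_nbrs (l : seq V) (x : V) : seq V := [seq u <- take (index x l) l | e u x].
Definition lparent (l : seq V) (x : V) : V := last x (earlier_nbrs l x).

Lemma LedgeE l x y :
  Ledge e l x y = [&& x \in l, earlier_nbrs l x != [::] & y == lparent l x].
Proof.
rewrite /Ledge /= -/(earlier_nbrs l x) index_mem /lparent.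
case E: (earlier_nbrs l x) => [|h tl] /=; first by rewrite !andbF.
have -> : 0 < index x l by move: E; rewrite /earlier_nbrs lt0n; case: eqP => // ->; rewrite take0.
by case: (y =P last h tl) => [->|]; rewrite ?mem_last ?andbF.
Qed.

End LTree.

Section LdfsOrdering.
Variables (V : finType) (e : rel V) (r : V) (sigma : seq V).
Hypothesis sigma_ldfs : LDFS_from e [set: V] r sigma.

Local Notation idx x := (index x sigma).
Local Notation p := (lparent e sigma).

(* [fconnect p b x] says that x is an L-tree ancestor of b; vertices without an
   earlier neighbour are fixpoints of p. *)

Lemma ldfs_uniq : uniq sigma.
Proof. by case: sigma_ldfs. Qed.

Lemma mem_ldfs x : x \in sigma.
Proof. by case: sigma_ldfs => _ _ -> _; rewrite in_setT. Qed.

Lemma ldfs_index_inj : injective (index^~ sigma).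
Proof. by move=> x y; apply: index_inj; rewrite ?mem_ldfs. Qed.

Lemma index_ldfs_root : idx r = 0.
Proof.
have sigma_gt0 : 0 < size sigma by rewrite -has_predT; apply/hasP; exists r; rewrite ?mem_ldfs.
case: sigma_ldfs => _ _ _ /(_ 0 sigma_gt0 r); rewrite drop0 mem_ldfs /ldfs_label /= eqxx.
by case: eqP => [<- _| _ /(_ isT)] //; rewrite index_uniq ?ldfs_uniq.
Qed.

Lemma ldfs_nbr_lexle b w : 0 < idx b <= idx w -> nbr_lexle e (rev (take (idx b) sigma)) w b.
Proof.
case/andP=> b_gt0 le_bw; have b_lt : idx b < size sigma by rewrite index_mem mem_ldfs.
have w_drop : w \in drop (idx b) sigma.
  have := mem_ldfs w; rewrite -{1}(cat_take_drop (idx b) sigma) mem_cat.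
  by rewrite in_take ?mem_ldfs // ltnNge le_bw.
have b_r : (b == r) = false by apply: contraTF b_gt0 => /eqP ->; rewrite index_ldfs_root.
have w_r : (w == r) = false.
  by apply: contraTF b_gt0 => /eqP wr; rewrite -leqNgt -index_ldfs_root -wr.
case: sigma_ldfs => _ _ _ /(_ _ b_lt w w_drop); rewrite nth_index ?mem_ldfs //.
by rewrite !ldfs_labelE ?(ltnW b_lt) // b_r w_r !cats0 lexle_prefix_label.
Qed.

Lemma lparent_earlier y : earlier_nbrs e sigma y != [::] -> idx (p y) < idx y /\ e (p y) y.
Proof.
move/(mem_last_nonnil y); rewrite mem_filter in_take ?mem_ldfs //.
by case/andP=> ->.
Qed.

Lemma index_lparent y : idx (p y) <= idx y.
Proof.
have [/lparent_earlier [/ltnW] //|] := boolP (earlier_nbrs e sigma y != [::]).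
by rewrite negbK /lparent => /eqP ->.
Qed.

Lemma earlier_nbr_le_lparent u y : u \in earlier_nbrs e sigma y -> idx u <= idx (p y).
Proof.
move=> u_nbr; have nonnil : earlier_nbrs e sigma y != [::] by apply: contraTneq u_nbr => ->.
rewrite /lparent (last_default_irr y u nonnil).
have := mem_last_nonnil u nonnil; rewrite mem_filter => /andP [_ p_take].
move: (u_nbr); rewrite mem_filter => /andP [_ u_take].
rewrite -(index_take u_take) -(index_take p_take).
exact: index_le_last_filter (take_uniq _ ldfs_uniq) u_nbr.
Qed.

Lemma index_ancestor x y : fconnect p y x -> idx x <= idx y.
Proof.
move/iter_findex <-; elim: (findex _ y x) => [|k IH] //=.
exact: leq_trans (index_lparent _) IH.
Qed.

Lemma ancestor_total x y z :
  fconnect p z x -> fconnect p z y -> idx x <= idx y -> fconnect p y x.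
Proof.
move=> /iter_findex zx /iter_findex zy le_xy.
case: (leqP (findex p z y) (findex p z x)) => [le_k | /ltnW le_k].
  by rewrite -zx -zy -(subnK le_k) iterD fconnect_iter.
have anc_y : fconnect p x y by rewrite -zx -zy -(subnK le_k) iterD fconnect_iter.
have -> : x = y by apply/ldfs_index_inj/eqP; rewrite eqn_leq le_xy index_ancestor.
exact: connect0.
Qed.

Definition on_active_path k := forall y w,
  idx y < k <= idx w -> e y w -> fconnect p (nth r sigma k.-1) y.

Lemma earlier_nbr_ancestor_of b x :
  on_active_path (idx b) -> e x b -> idx x < idx b -> fconnect p b x.
Proof.
move=> active e_xb lt_xb.
have x_nbr : x \in earlier_nbrs e sigma b by rewrite mem_filter e_xb in_take ?mem_ldfs.
have [lt_pb e_pb] : idx (p b) < idx b /\ e (p b) b.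
  by apply: lparent_earlier; apply: contraTneq x_nbr => ->.
have anc_x : fconnect p (nth r sigma (idx b).-1) x by apply: (active x b); rewrite // lt_xb /=.
have anc_p : fconnect p (nth r sigma (idx b).-1) (p b) by apply: (active _ b); rewrite // lt_pb /=.
apply: connect_trans (fconnect1 p b) _.
exact: ancestor_total anc_x anc_p (earlier_nbr_le_lparent x_nbr).
Qed.

Lemma on_active_path_all k : 0 < k <= size sigma -> on_active_path k.
Proof.
elim: k => [//|k IH] /andP [_ le_k] y w /andP [lt_y le_w] e_yw /=.
have [k0 | k_gt0] := posnP k.
  move: lt_y; rewrite k0 ltnS leqn0 => /eqP y0.
  by rewrite -y0 nth_index ?mem_ldfs ?connect0.
have active := IH (introT andP (conj k_gt0 (ltnW le_k))).
move: lt_y; rewrite ltnS leq_eqVlt => /orP [/eqP yk | lt_yk].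
  by rewrite -yk nth_index ?mem_ldfs ?connect0.
set b := nth r sigma k.
have idx_b : idx b = k by rewrite index_uniq ?ldfs_uniq.
have le_wb : nbr_lexle e (rev (take k sigma)) w b.
  by rewrite -idx_b; apply: ldfs_nbr_lexle; rewrite idx_b k_gt0 ltnW.
have y_take : y \in take k sigma by rewrite in_take ?mem_ldfs.
have [z z_take [le_yz e_zb]] := nbr_lexle_witness (take_uniq k ldfs_uniq) le_wb y_take e_yw.
rewrite !index_take // in le_yz.
have lt_zk : idx z < k by rewrite -(in_take _ (mem_ldfs z)).
have anc_zb : fconnect p b z by apply: earlier_nbr_ancestor_of; rewrite ?idx_b.
have anc_y : fconnect p (nth r sigma k.-1) y by apply: (active y w); rewrite // lt_yk ltnW.
have anc_z : fconnect p (nth r sigma k.-1) z by apply: (active z b); rewrite // lt_zk idx_b /=.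
exact: connect_trans anc_zb (ancestor_total anc_y anc_z le_yz).
Qed.

Lemma earlier_nbr_ancestor x b : e x b -> idx x < idx b -> fconnect p b x.
Proof.
move=> e_xb lt_xb; apply: earlier_nbr_ancestor_of => //; apply: on_active_path_all.
by rewrite (leq_ltn_trans _ lt_xb) // ltnW // index_mem mem_ldfs.
Qed.

Section Restriction.
Variables (t : rel V) (S : {set V}).
Hypothesis sigma_Ltree : is_Ltree e sigma t.
Hypothesis S_connected : connected_on S t.

Definition sigmaS : seq V := [seq x <- sigma | x \in S].
Definition rS : V := head r sigmaS.

Lemma sigmaS_cons : sigmaS = rS :: behead sigmaS.
Proof.
case: S_connected => [[x x_S] _]; have : x \in sigmaS by rewrite mem_filter x_S mem_ldfs.
by rewrite /rS; case: sigmaS.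
Qed.

Lemma rS_in : rS \in S.
Proof. by have := mem_head rS (behead sigmaS); rewrite -sigmaS_cons mem_filter => /andP []. Qed.

Lemma index_rS_le a : a \in S -> idx rS <= idx a.
Proof. by move=> a_S; apply: index_head_filter; rewrite ?mem_ldfs. Qed.

Lemma rS_root : r \in S -> rS = r.
Proof.
move/index_rS_le; rewrite index_ldfs_root leqn0 => /eqP.
by rewrite -index_ldfs_root => /ldfs_index_inj.
Qed.

Lemma restr_connect_descendant v z : v \in S ->
  ~~ ((earlier_nbrs e sigma v != [::]) && (p v \in S)) ->
  connect (restr S t) v z -> fconnect p z v.
Proof.
move=> v_S top /connectP [pth pth_ok ->].
have desc_path q y : fconnect p y v -> path (restr S t) y q -> fconnect p (last y q) v.
  elim: q y => [|u q IH] y //= anc_y /andP [t_yu q_ok].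
  apply: IH q_ok; case/and3P: t_yu; rewrite sigma_Ltree !LedgeE !mem_ldfs /=.
  case/orP=> [/andP [y_nbrs /eqP ->] _ py_S | /andP [_ /eqP y_pu] _ _]; last first.
    by rewrite y_pu in anc_y; exact: connect_trans (fconnect1 p u) anc_y.
  move: anc_y; rewrite fconnect_eqVf => /orP [/eqP yv | //].
  by move: top; rewrite -yv y_nbrs py_S.
by apply: desc_path pth_ok; apply: connect0.
Qed.

Lemma lparent_in_S v : v \in S -> v != rS -> (earlier_nbrs e sigma v != [::]) && (p v \in S).
Proof.
move=> v_S; apply: contraNT => top; apply/eqP/ldfs_index_inj/eqP.
case: S_connected => _ /(_ v rS v_S rS_in) /(restr_connect_descendant v_S top) anc.
by rewrite eqn_leq index_ancestor // index_rS_le.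
Qed.

Lemma ancestor_in_S x y : y \in S -> fconnect p y x -> idx rS < idx x -> x \in S.
Proof.
move=> y_S anc_x; rewrite -(iter_findex anc_x); move: (findex p y x) => k.
elim: k y y_S {anc_x} => [|k IH] y y_S //.
rewrite iterSr => lt_rS; apply: IH (lt_rS).
suff /(lparent_in_S y_S) /andP [] : y != rS by [].
apply: contraTneq lt_rS => ->; rewrite -leqNgt.
exact: leq_trans (index_ancestor (fconnect_iter _ _ _)) (index_lparent rS).
Qed.

Lemma between_nbr_in_S a b x : a \in S -> b \in S -> e x b -> idx a < idx x < idx b -> x \in S.
Proof.
move=> a_S b_S e_xb /andP [lt_ax lt_xb].
apply: ancestor_in_S b_S (earlier_nbr_ancestor e_xb lt_xb) _.
exact: leq_ltn_trans (index_rS_le a_S) lt_ax.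
Qed.

Lemma sigmaS_ldfs : LDFS_from e S rS sigmaS.
Proof.
have sigmaS_uniq : uniq sigmaS by apply: filter_uniq ldfs_uniq.
split=> //; first exact: rS_in.
  by move=> x; rewrite mem_filter mem_ldfs andbT.
move=> i lt_i w; set b := nth rS sigmaS i.
have b_S : b \in S by have := mem_nth rS lt_i; rewrite mem_filter => /andP [].
have index_b : index b sigmaS = i by rewrite index_uniq.
rewrite -{1}index_b drop_index_filter ?mem_ldfs // mem_filter => /andP [w_S w_drop].
have le_bw : idx b <= idx w := leq_index_drop ldfs_uniq w_drop.
have [i0 | i_gt0] := posnP i.
  by rewrite /b i0 sigmaS_cons /ldfs_label /= eqxx; case: (w == rS).
have b_rS : b != rS by apply: contraTneq i_gt0 => brS; rewrite -index_b brS sigmaS_cons /= eqxx.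
have lt_rS_b : idx rS < idx b.
  by rewrite ltn_neqAle index_rS_le // andbT; apply: contra b_rS => /eqP/ldfs_index_inj ->.
have w_rS : w != rS by apply: contraTneq le_bw => ->; rewrite -ltnNge.
have le_wb : nbr_lexle e (rev (take (idx b) sigma)) w b.
  by apply: ldfs_nbr_lexle; rewrite le_bw andbT (leq_ltn_trans _ lt_rS_b).
rewrite !ldfs_labelE ?(ltnW lt_i) // (negbTE w_rS) (negbTE b_rS) !cats0 -index_b.
rewrite take_index_filter ?mem_ldfs // lexle_prefix_label.
apply: nbr_lexle_filter (take_uniq _ ldfs_uniq) le_wb _ => x a x_take a_take.
rewrite !index_take // => lt_ax e_xb a_S; apply: (between_nbr_in_S a_S b_S e_xb).
by rewrite lt_ax -(in_take _ (mem_ldfs x)).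
Qed.

Lemma earlier_nbrs_rS : earlier_nbrs e sigmaS rS = [::].
Proof. by rewrite /earlier_nbrs {1 2}sigmaS_cons /= eqxx take0. Qed.

Lemma earlier_nbrs_sigmaS x : x \in S ->
  earlier_nbrs e sigmaS x = [seq u <- earlier_nbrs e sigma x | u \in S].
Proof.
move=> x_S; rewrite /earlier_nbrs take_index_filter ?mem_ldfs // -!filter_predI.
by apply: eq_filter => u /=; rewrite andbC.
Qed.

Lemma Ledge_sigmaS x y : Ledge e sigmaS x y = [&& x \in S, y \in S & Ledge e sigma x y].
Proof.
rewrite !LedgeE mem_filter mem_ldfs andbT.
have [x_S /= | //] := boolP (x \in S).
have [-> | x_rS] := eqVneq x rS.
  rewrite earlier_nbrs_rS /=; apply/esym/and3P => [[y_S /lparent_earlier [lt_p _] /eqP y_p]].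
  by move: lt_p; rewrite -y_p ltnNge index_rS_le.
case/andP: (lparent_in_S x_S x_rS) => nbrs_x px_S.
have [nbrsS_x last_x] := last_filter_last (P := fun u => u \in S) nbrs_x px_S.
rewrite earlier_nbrs_sigmaS // nbrsS_x /lparent earlier_nbrs_sigmaS // last_x nbrs_x /=.
by case: eqP => [->|]; rewrite ?px_S ?andbF.
Qed.

Lemma sigmaS_Ltree : is_Ltree e sigmaS (restr S t).
Proof.
move=> x y; rewrite /restr /= sigma_Ltree !Ledge_sigmaS.
by case: (x \in S); case: (y \in S); rewrite /= ?andbF ?andbT.
Qed.

End Restriction.
End LdfsOrdering.

Theorem lemma5 (V : finType) (e t : rel V) (S : {set V}) :
  symmetric e -> irreflexive e -> connected_on [set: V] e ->
  symmetric t -> irreflexive t ->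
  spanning_tree_on e [set: V] t ->
  spanning_tree_on e S t ->
  (forall sigma, LDFS e [set: V] sigma -> is_Ltree e sigma t ->
     exists sigma', LDFS e S sigma' /\ is_Ltree e sigma' (restr S t)) /\
  (forall (r : V) sigma, LDFS_from e [set: V] r sigma -> is_Ltree e sigma t ->
     r \in S ->
     exists sigma', LDFS_from e S r sigma' /\ is_Ltree e sigma' (restr S t)).
Proof.
move=> _ _ _ _ _ _ [_ [S_connected _]].
have restrict r sigma : LDFS_from e [set: V] r sigma -> is_Ltree e sigma t ->
    LDFS_from e S (rS r sigma S) (sigmaS sigma S) /\ is_Ltree e (sigmaS sigma S) (restr S t).
  by move=> sigma_ldfs sigma_Ltree; split; [exact: sigmaS_ldfs | exact: (sigmaS_Ltree sigma_ldfs)].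
split=> [sigma [r sigma_ldfs] | r sigma sigma_ldfs] /(restrict _ _ sigma_ldfs) [ldfsS LtreeS].
  by exists (sigmaS sigma S); split=> //; exists (rS r sigma S).
by move=> r_S; exists (sigmaS sigma S); rewrite -{1}(rS_root sigma_ldfs r_S).
Qed.
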